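(* Let $R$ be a commutative ring with identity and $M$ an $R$-module; for $a\in R$ let $\mathfrak{a}=aR$. The following statements are equivalent: (1) $M$ is reduced; (2) $a\Gamma_{a}(M)=0$ for all $a\in R$; (3) $(0:_M a)=(0:_M a^{k})$ for all $a\in R$ and all $k\in\mathbb{Z}^{+}$; (4) $\varinjlim_{k}\operatorname{Hom}_R(R/\mathfrak{a}^{k},M)\cong \operatorname{Hom}_R(R/\mathfrak{a},M)$ for all $a\in R$; (5) $\Gamma_{a}(M)\cong \operatorname{Hom}_R(R/\mathfrak{a},M)$ for all $a\in R$; (6) for all $a\in R$, $0\to \Gamma_{a}(M)\to M\to aM\to 0$ is a short exact sequence, where the first map is the inclusion and the second is $m\mapsto am$.
   Context: All rings are commutative with identity. For an $R$-module $M$ and $a\in R$: $M$ is $a$-reduced if for all $m\in M$, $a^{2}m=0$ implies $am=0$; $M$ is reduced if it is $a$-reduced for every $a\in R$. $\Gamma_{a}(M)=\{m\in M \mid a^{k}m=0 \text{ for some } k\in\mathbb{Z}^{+}\}$, $a\Gamma_{a}(M)=\{am \mid m\in \Gamma_a(M)\}$, and $(0:_M a^{k})=\{m\in M\mid a^{k}m=0\}$. *)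

From HB Require Import structures.
From mathcomp Require Import all_boot all_order all_algebra.
Set Implicit Arguments. Unset Strict Implicit. Unset Printing Implicit Defensive.
Import Order.TTheory GRing.Theory.
Local Open Scope ring_scope.

Section Defs.
Variables (R : comPzRingType) (M : lmodType R).

Definition a_reduced (a : R) : Prop :=
  forall m : M, a ^+ 2 *: m = 0 -> a *: m = 0.
Definition reduced : Prop := forall a : R, a_reduced a.

Definition Gamma (a : R) (m : M) : Prop := exists k : nat, (0 < k)%N /\ a ^+ k *: m = 0.

Definition annM (a : R) (k : nat) (m : M) : Prop := a ^+ k *: m = 0.

Definition aM (a : R) (y : M) : Prop := exists m : M, y = a *: m.

Definition pideal (a : R) (k : nat) (x : R) : Prop := exists r : R, x = a ^+ k * r.

(* Hom_R(R/I, M), represented (universal property of the quotient R -> R/I)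
   as the R-linear maps f : R -> M vanishing on the ideal I. *)
Definition homQ (I : R -> Prop) (f : R -> M) : Prop :=
  [/\ forall r s, f (r + s) = f r + f s,
      forall r s, f (r * s) = r *: f s
    & forall x, I x -> f x = 0].
End Defs.

(* R-modules presented as "setoid submodules": a carrier type, a membership
   predicate, an equivalence (equality of elements), and the operations. *)
Record smod (R : comPzRingType) := SMod {
  sm_car :> Type;
  sm_mem : sm_car -> Prop;
  sm_eq : sm_car -> sm_car -> Prop;
  sm_add : sm_car -> sm_car -> sm_car;
  sm_scale : R -> sm_car -> sm_car
}.

Definition smod_iso (R : comPzRingType) (X Y : smod R) : Prop :=
  exists phi : X -> Y,
  [/\ forall x, sm_mem x -> sm_mem (phi x),
      forall x y, sm_mem x -> sm_mem y -> sm_eq x y -> sm_eq (phi x) (phi y),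
      forall x y, sm_mem x -> sm_mem y -> sm_eq (phi x) (phi y) -> sm_eq x y,
      (forall y, sm_mem y -> (exists2 x, sm_mem x & sm_eq (phi x) y))
    & (forall x y, sm_mem x -> sm_mem y ->
        sm_eq (phi (sm_add x y)) (sm_add (phi x) (phi y))
    /\ forall r x, sm_mem x -> sm_eq (phi (sm_scale r x)) (sm_scale r (phi x)))].

Definition sub_smod (R : comPzRingType) (M : lmodType R) (S : M -> Prop) : smod R :=
  @SMod R M S (@eq M) +%R (fun r m => r *: m).

Definition hom_smod (R : comPzRingType) (M : lmodType R) (I : R -> Prop) : smod R :=
  @SMod R (R -> M) (@homQ R M I) (fun f g => forall x, f x = g x)
    (fun f g x => f x + g x) (fun r f x => r *: f x).

(* Transition map Hom_R(R/a^k R, M) -> Hom_R(R/a^(k+1) R, M) of the direct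
   system, induced by the projection R/a^(k+1)R -> R/a^k R; on the
   representatives R -> M it is precomposition with the identity of R. *)
Definition trans (R : comPzRingType) (M : lmodType R) (f : R -> M) : R -> M :=
  fun x => f x.

(* lim_k Hom_R(R/(aR)^k, M): elements are pairs (k, f) with f in
   Hom_R(R/a^k R, M); (k,f) ~ (l,g) iff their images agree at some stage
   n >= k, l; operations computed at a common stage. *)
Definition dirlim_smod (R : comPzRingType) (M : lmodType R) (a : R) : smod R :=
  @SMod R (nat * (R -> M))%type
    (fun p => homQ (pideal a p.1) p.2)
    (fun p q => exists n : nat, [/\ (p.1 <= n)%N, (q.1 <= n)%N &
        forall x, iter (n - p.1) (@trans R M) p.2 x
                  = iter (n - q.1) (@trans R M) q.2 x])
    (fun p q => (maxn p.1 q.1,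
        fun x => iter (maxn p.1 q.1 - p.1) (@trans R M) p.2 x
               + iter (maxn p.1 q.1 - q.1) (@trans R M) q.2 x))
    (fun r p => (p.1, fun x => r *: p.2 x)).

From mathcomp Require Import all_boot all_order all_algebra.
Import GRing.Theory.
Local Open Scope ring_scope.

(* Everything goes through condition (2), a Gamma_a(M) = 0.  Reducedness
   gives it by lowering the exponent: a^(k+2) m = a^2 (a^k m) = 0 forces
   a^(k+1) m = 0.  A map f in Hom_R(R/a^k R, M) is determined by f 1, which
   satisfies a^k (f 1) = 0; hence Hom_R(R/aR, M) is killed by a, and so is any
   module isomorphic to it, which forces a Gamma_a(M) = 0 when the module is
   Gamma_a(M) or the direct limit.  Conversely, once a Gamma_a(M) = 0, the
   orbit maps m |-> (r |-> r m) are the required isomorphisms. *)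

Section Reduced.
Variables (R : comPzRingType) (M : lmodType R).

Definition aGamma_eq0 : Prop := forall (a : R) (m : M), Gamma a m -> a *: m = 0.

Definition orbit_map (m : M) : R -> M := fun x => x *: m.

Lemma Gamma0 (a : R) : Gamma a (0 : M).
Proof. by exists 1%N; rewrite scaler0. Qed.

Lemma GammaZ {a : R} (r : R) {m : M} : Gamma a m -> Gamma a (r *: m).
Proof.
by case=> k [k_gt0 akm]; exists k; rewrite scalerA mulrC -scalerA akm scaler0.
Qed.

Lemma ann_Gamma {a : R} {m : M} : a *: m = 0 -> Gamma a m.
Proof. by move=> am0; exists 1%N; rewrite expr1. Qed.

Lemma iter_trans (n : nat) (f : R -> M) : iter n (@trans R M) f = f.
Proof. by elim: n => //= n ->. Qed.

Lemma homQ_eval1 {I : R -> Prop} {f : R -> M} (x : R) :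
  homQ I f -> f x = x *: f 1.
Proof. by case=> _ fM _; rewrite -fM mulr1. Qed.

Lemma homQZ {I : R -> Prop} (r : R) {f : R -> M} :
  homQ I f -> homQ I (fun x => r *: f x).
Proof.
case=> fD fM fI; split=> [x y | x y | x /fI ->]; last exact: scaler0.
  by rewrite fD scalerDr.
by rewrite fM !scalerA mulrC.
Qed.

Lemma homQ_orbit_map {a : R} {k : nat} {m : M} :
  a ^+ k *: m = 0 -> homQ (pideal a k) (orbit_map m).
Proof.
move=> akm; split=> [x y | x y | _ [r ->]]; rewrite /orbit_map.
- exact: scalerDl.
- by rewrite scalerA.
- by rewrite mulrC -scalerA akm scaler0.
Qed.

Lemma homQ_pideal_ann {a : R} {k : nat} {f : R -> M} :
  homQ (pideal a k) f -> a ^+ k *: f 1 = 0.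
Proof.
move=> homf; rewrite -(homQ_eval1 _ homf).
by case: homf => _ _; apply; exists 1; rewrite mulr1.
Qed.

Lemma homQ_pideal_Gamma {a : R} {k : nat} {f : R -> M} :
  homQ (pideal a k) f -> Gamma a (f 1).
Proof.
move/homQ_pideal_ann; case: k => [|k akf].
  by rewrite expr0 scale1r => ->; exact: Gamma0.
by exists k.+1.
Qed.

(* The module Hom_R(R/aR, M) is killed by a, and isomorphisms transport this;
   0 *: x stands for the zero of X, which need not be closed under scaling. *)
Lemma smod_iso_hom_pideal1_scale {X : smod R} {a : R} {x : X} :
    smod_iso X (hom_smod M (pideal a 1)) ->
    sm_mem x -> sm_mem (sm_scale a x) -> sm_mem (sm_scale 0 x) ->
  sm_eq (sm_scale a x) (sm_scale 0 x).
Proof.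
move=> [phi [phi_mem _ phi_inj _ phi_lin]] x_mem ax_mem x0_mem.
apply: phi_inj => // y; have [_ phiZ] := phi_lin x x x_mem x_mem.
rewrite (phiZ a x x_mem) (phiZ 0 x x_mem) /= scale0r.
have [_ phiM phiI] := phi_mem x x_mem.
by rewrite -phiM; apply: phiI; exists y; rewrite expr1.
Qed.

Lemma reduced_aGamma_eq0 : reduced M -> aGamma_eq0.
Proof.
move=> red a m [k [k_gt0]]; case: k k_gt0 => // k _.
elim: k m => [|k IHk] m; first by rewrite expr1.
move=> akm; apply: IHk; rewrite exprS -scalerA; apply: red.
by rewrite scalerA -exprD addnC addn2.
Qed.

Lemma aGamma_eq0_reduced : aGamma_eq0 -> reduced M.
Proof. by move=> aG0 a m a2m; apply: aG0; exists 2%N. Qed.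

Lemma annM_aGamma_eq0 :
    (forall (a : R) (k : nat), (0 < k)%N ->
       forall m : M, annM a 1 m <-> annM a k m) ->
  aGamma_eq0.
Proof.
by move=> ann a m [k [k_gt0 /(ann a k k_gt0 m).2]]; rewrite /annM expr1.
Qed.

Lemma Gamma_iso_aGamma_eq0 :
    (forall a : R,
       smod_iso (sub_smod (@Gamma R M a)) (hom_smod M (pideal a 1))) ->
  aGamma_eq0.
Proof.
move=> iso a m Gm; rewrite -(scale0r m).
exact: (smod_iso_hom_pideal1_scale (iso a) Gm (GammaZ a Gm) (GammaZ 0 Gm)).
Qed.

Lemma dirlim_iso_aGamma_eq0 :
    (forall a : R, smod_iso (dirlim_smod M a) (hom_smod M (pideal a 1))) ->
  aGamma_eq0.
Proof.
move=> iso a m [k [_ akm]].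
have homm := homQ_orbit_map akm.
have [n [_ _]] := smod_iso_hom_pideal1_scale
  (x := (k, orbit_map m) : dirlim_smod M a)
  (iso a) homm (homQZ a homm) (homQZ 0 homm).
by rewrite !iter_trans => /(_ 1) /=; rewrite /orbit_map scale1r scale0r.
Qed.

Section Killed.
Hypothesis aG0 : aGamma_eq0.

Lemma annM_pow_equiv (a : R) (k : nat) (m : M) :
  (0 < k)%N -> annM a 1 m <-> annM a k m.
Proof.
rewrite /annM expr1; case: k => // k _; split.
  by rewrite exprSr -scalerA => ->; rewrite scaler0.
by move=> akm; apply: aG0; exists k.+1.
Qed.

Lemma Gamma_iso_hom_pideal1 (a : R) :
  smod_iso (sub_smod (@Gamma R M a)) (hom_smod M (pideal a 1)).
Proof.
exists orbit_map; split=> /=.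
- by move=> m /aG0 am0; apply: homQ_orbit_map; rewrite expr1.
- by move=> m m' _ _ ->.
- by move=> m m' _ _ /(_ 1); rewrite /orbit_map !scale1r.
- move=> f homf; exists (f 1); first exact: homQ_pideal_Gamma homf.
  by move=> x; rewrite /orbit_map -(homQ_eval1 _ homf).
- move=> m m' _ _; split=> [x | r m'' _ x]; rewrite /orbit_map.
    exact: scalerDr.
  by rewrite !scalerA mulrC.
Qed.

Lemma dirlim_iso_hom_pideal1 (a : R) :
  smod_iso (dirlim_smod M a) (hom_smod M (pideal a 1)).
Proof.
exists (fun p => orbit_map (p.2 1)); split=> /=.
- move=> [k f] /homQ_pideal_Gamma/aG0 af0.
  by apply: homQ_orbit_map; rewrite expr1.
- by move=> p q _ _ [n [_ _]]; rewrite !iter_trans => ->.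
- move=> p q homp homq /(_ 1); rewrite /orbit_map !scale1r => pq1.
  exists (maxn p.1 q.1); rewrite leq_maxl leq_maxr !iter_trans; split=> // x.
  by rewrite (homQ_eval1 x homp) (homQ_eval1 x homq) pq1.
- move=> f homf; exists (1%N, f) => // x.
  by rewrite /orbit_map -(homQ_eval1 _ homf).
- move=> p q _ _; split=> [x | r p' _ x]; rewrite /orbit_map /= ?iter_trans.
    exact: scalerDr.
  by rewrite !scalerA mulrC.
Qed.

End Killed.
End Reduced.

Theorem mainTheorem2 (R : comPzRingType) (M : lmodType R) :
  [<->
   (* (1) *) reduced M;
   (* (2) *) forall a : R, forall m : M, Gamma a m -> a *: m = 0;
   (* (3) *) forall (a : R) (k : nat), (0 < k)%N ->
               forall m : M, annM a 1 m <-> annM a k m;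
   (* (4) *) forall a : R,
               smod_iso (dirlim_smod M a) (hom_smod M (pideal a 1));
   (* (5) *) forall a : R,
               smod_iso (sub_smod (@Gamma R M a)) (hom_smod M (pideal a 1));
   (* (6) *) forall a : R,
               [/\ (* inclusion Gamma_a(M) -> M is injective *)
                   forall m m' : M, Gamma a m -> Gamma a m' -> m = m' -> m = m',
                   (* image of the inclusion = kernel of m |-> a m *)
                   forall m : M, Gamma a m <-> a *: m = 0
                 & (* m |-> a m maps M onto aM *)
                   forall y : M, aM a y -> exists m : M, a *: m = y]].
Proof.
tfae.
- exact: reduced_aGamma_eq0.
- by move=> aG0 a k k_gt0 m; apply: annM_pow_equiv.
- by move/annM_aGamma_eq0/dirlim_iso_hom_pideal1.
- by move/dirlim_iso_aGamma_eq0/Gamma_iso_hom_pideal1.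
- move/Gamma_iso_aGamma_eq0=> aG0 a.
  split=> // [m | y [m ->]]; last by exists m.
  by split; [exact: aG0 | exact: ann_Gamma].
- move=> exact_seq; apply: aGamma_eq0_reduced => a m.
  by have [_ Gamma_ker _] := exact_seq a; apply: (Gamma_ker m).1.
Qed.
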